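(* Let $K$ be a field and $m,n,r$ positive integers. Let $R=K[x_{ij}^k \mid 1\le i\le m,\ 1\le j\le n,\ 1\le k\le r]$ and let $I_{mn}^r$ be the ideal generated by all $2$-minors of the horizontal and of the vertical concatenation of the $m\times n$ matrices $X_k=(x_{ij}^k)$, $k=1,\dots,r$. Let $P_{mnr}$ be the poset which is the disjoint union of three pairwise incomparable chains of cardinalities $m-1$, $n-1$, $r-1$, with a natural labeling $P_{mnr}=\{p_1,\dots,p_{N}\}$, $N=m+n+r-3$ (i.e. $p_i\prec p_j$ implies $i<j$). Then the $h$-polynomial of $R/I_{mn}^r$ equals $\sum_{w\in\mathcal L(P_{mnr})}t^{\operatorname{des}(w)}$.
   Context: $\mathcal L(P)$ is the set of linear extensions of $P$, i.e. bijections $w:P\to\{1,\dots,|P|\}$ with $p\preceq q\Rightarrow w(p)\le w(q)$. A descent of $w$ is an index $i$ such that $w(p_j)=i$ and $w(p_k)=i+1$ with $j>k$; $\operatorname{des}(w)$ is the number of descents. The $h$-polynomial of a standard graded algebra $A$ is the numerator of its Hilbert series written in reduced form $h(t)/(1-t)^{\dim A}$. *)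

From HB Require Import structures.
From mathcomp Require Import all_boot all_order all_algebra.
From mathcomp Require Import mpoly.
Set Implicit Arguments. Unset Strict Implicit. Unset Printing Implicit Defensive.
Import Order.TTheory GRing.Theory Num.Theory.
Local Open Scope ring_scope.

Definition in_ideal (N : nat) (K : fieldType) (G : {mpoly K[N]} -> Prop)
  (p : {mpoly K[N]}) : Prop :=
  exists s : seq ({mpoly K[N]} * {mpoly K[N]}),
    (forall x, x \in s -> G x.2) /\ p = \sum_(x <- s) x.1 * x.2.

Definition indep_mod (N : nat) (K : fieldType) (G : {mpoly K[N]} -> Prop)
  (d k : nat) (p : 'I_k -> {mpoly K[N]}) : Prop :=
  (forall i, p i \is d.-homog) /\
  (forall c : 'I_k -> K, in_ideal G (\sum_(i < k) c i *: p i) ->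
     forall i, c i = 0).

(* hilb_dim G d k  :<->  dim_K (R/<G>)_d = k  (R = K[x_1..x_N], standard
   grading, <G> homogeneous): k is the maximal size of a family of degree-d
   forms linearly independent modulo <G>. *)
Definition hilb_dim (N : nat) (K : fieldType) (G : {mpoly K[N]} -> Prop)
  (d k : nat) : Prop :=
  (exists p : 'I_k -> {mpoly K[N]}, indep_mod G d p) /\
  (forall p : 'I_k.+1 -> {mpoly K[N]}, ~ indep_mod G d p).

(* h is the h-polynomial of R/<G>: the Hilbert series of R/<G> equals
   h(t)/(1-t)^D in reduced form (h(1) <> 0) for some D.  The coefficient
   of t^j in (1-t)^{-D} is 'C(j + D - 1, j) (in nat this also gives the
   right value 1,0,0,... when D = 0). *)
Definition is_h_polynomial (N : nat) (K : fieldType) (G : {mpoly K[N]} -> Prop)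
  (h : {poly int}) : Prop :=
  h.[1] != 0 /\
  exists D : nat, forall d : nat, exists k : nat,
    hilb_dim G d k /\
    (k%:Z = \sum_(i < d.+1) h`_i * ('C(d - i + D - 1, d - i))%:Z)%R.

Definition var_index (m n r : nat) := ('I_m * 'I_n * 'I_r)%type.
Definition nvars (m n r : nat) : nat := #|{: var_index m n r}|.

Definition xv (K : fieldType) (m n r : nat) (i : 'I_m) (j : 'I_n) (k : 'I_r)
  : {mpoly K[nvars m n r]} := 'X_(enum_rank (i, j, k)).

(* Generators of I_{mn}^r: the 2-minors of the horizontal concatenation
   [X_1 | ... | X_r]  (m x nr, entry at row i, column (j,k) is x_{ij}^k)
   and of the vertical concatenation (mr x n, entry at row (i,k), column j
   is x_{ij}^k). A 2-minor with rows a<>b and columns c<>e is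
   A_ac A_be - A_ae A_bc (its sign does not affect the ideal). *)
Definition minors2 (K : fieldType) (m n r : nat)
  (g : {mpoly K[nvars m n r]}) : Prop :=
  (exists (i i' : 'I_m) (j j' : 'I_n) (k k' : 'I_r),
     i != i' /\ (j, k) != (j', k') /\
     g = xv K i j k * xv K i' j' k' - xv K i j' k' * xv K i' j k)
  \/
  (exists (i i' : 'I_m) (j j' : 'I_n) (k k' : 'I_r),
     (i, k) != (i', k') /\ j != j' /\
     g = xv K i j k * xv K i' j' k' - xv K i j' k * xv K i' j k').

Definition Pmnr (m n r : nat) := ('I_(m.-1) + 'I_(n.-1) + 'I_(r.-1))%type.

Definition Ple (m n r : nat) (p q : Pmnr m n r) : bool :=
  match p, q with
  | inl (inl a), inl (inl b) => (a <= b)%N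
  | inl (inr a), inl (inr b) => (a <= b)%N
  | inr a, inr b => (a <= b)%N
  | _, _ => false
  end.

Definition Nsize (m n r : nat) : nat := (m.-1 + n.-1 + r.-1)%N.

(* a natural labeling P = {p_1..p_N}, encoded 0-based: lab p is the index of p *)
Definition natural_labeling (m n r : nat) (lab : Pmnr m n r -> 'I_(Nsize m n r))
  : Prop :=
  bijective lab /\ forall p q, Ple p q -> (lab p <= lab q)%N.

Definition linext (m n r : nat) (w : {ffun Pmnr m n r -> 'I_(Nsize m n r)})
  : bool :=
  injectiveb w && [forall p, forall q, Ple p q ==> (w p <= w q)%N].

Definition des (m n r : nat) (lab : Pmnr m n r -> 'I_(Nsize m n r))
  (w : {ffun Pmnr m n r -> 'I_(Nsize m n r)}) : nat :=
  #|[set i : 'I_(Nsize m n r) | [exists p, exists q,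
      [&& (w p == i :> nat), (w q == i.+1 :> nat) & (lab q < lab p)%N]]]|.

Definition des_poly (m n r : nat) (lab : Pmnr m n r -> 'I_(Nsize m n r))
  : {poly int} :=
  \sum_(w : {ffun Pmnr m n r -> 'I_(Nsize m n r)} | linext w) 'X^(des lab w).

From HB Require Import structures.
From mathcomp Require Import all_boot all_order all_algebra.
From mathcomp Require Import mpoly.
From mathcomp Require Import ring zify.
Set Implicit Arguments. Unset Strict Implicit. Unset Printing Implicit Defensive.

(* The substitution x_ij^k |-> y_i z_j u_k kills every generator of I, and the
   2-minors let one sort the row, column and layer indices of a monomial
   independently, so the monomials x_{a1 b1}^{c1} ... x_{ad bd}^{cd} with a, b, c
   weakly increasing span (R/I)_d; their images are distinct monomials, hence
   dim (R/I)_d = C(m-1+d, d) C(n-1+d, d) C(r-1+d, d).  That is also the number of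
   order-preserving maps P_mnr -> {0..d}.  By Stanley's theory of P-partitions
   each such map is compatible with exactly one linear extension w, and
   C(N+d-des w, N) maps are compatible with w; so the Hilbert series is
   (sum_w t^des(w)) / (1-t)^(N+1). *)

Lemma card_in_bij (T1 T2 : finType) (A : {set T1}) (B : {set T2})
    (f : T1 -> T2) (g : T2 -> T1) :
  {in A, forall x, f x \in B} -> {in B, forall y, g y \in A} ->
  {in A, cancel f g} -> {in B, cancel g f} -> #|A| = #|B|.
Proof.
move=> fAB gBA fK gK; apply/eqP; rewrite eqn_leq; apply/andP; split.
  rewrite -(card_in_imset (can_in_inj fK)); apply: subset_leq_card.
  by apply/subsetP => _ /imsetP [x Ax ->]; apply: fAB.
rewrite -(card_in_imset (can_in_inj gK)); apply: subset_leq_card.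
by apply/subsetP => _ /imsetP [y By ->]; apply: gBA.
Qed.

Lemma card_ord_pred N (P : pred nat) : #|[set i : 'I_N | P i]| = count P (iota 0 N).
Proof.
rewrite cardsE cardE /enum_mem size_filter -val_enum_ord count_map.
by rewrite /enum_mem filter_predT; apply: eq_count.
Qed.

Lemma sum_nat_bool (T : Type) (s : seq T) (a : pred T) :
  \sum_(t <- s) (a t : nat) = count a s.
Proof. by rewrite -sum1_count [RHS]big_mkcond; apply: eq_bigr => t _; case: (a t). Qed.

Lemma nth_val_tuple N p (t : N.-tuple 'I_p) (i : 'I_N) : nth 0 (map val t) i = tnth t i.
Proof. by rewrite -[map val t]/(val (map_tuple val t)) -tnth_nth tnth_map. Qed.

Lemma sorted_tupleP N p (t : N.-tuple 'I_p) :
  reflect (forall i j : 'I_N, i <= j -> tnth t i <= tnth t j) (sorted leq (map val t)).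
Proof.
apply: (iffP idP) => [t_sorted i j le_ij | t_mono].
  have := sorted_leq_nth leq_trans leqnn 0 t_sorted.
  rewrite size_map size_tuple => /(_ i j (ltn_ord i) (ltn_ord j) le_ij).
  by rewrite !nth_val_tuple.
apply/(sortedP 0) => i; rewrite size_map size_tuple => lt_iN.
have lt_i'N : i < N by lia.
rewrite -[i]/(nat_of_ord (Ordinal lt_i'N)) -[i.+1]/(nat_of_ord (Ordinal lt_iN)).
by rewrite !nth_val_tuple t_mono.
Qed.

Lemma binC a b : 'C(a + b, a) = 'C(a + b, b).
Proof. by rewrite -{2}(addnK b a) bin_sub // leq_addl. Qed.

Definition count_below (D : pred nat) i := count D (iota 0 i).

Lemma count_belowS D i : count_below D i.+1 = count_below D i + D i.
Proof. by rewrite /count_below -addn1 iotaD count_cat /= addn0. Qed.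

Lemma count_below_mono D : {homo count_below D : i j / i <= j}.
Proof.
move=> i j /subnK <-; elim: (j - i) => [|t IH] //.
by rewrite addSn count_belowS (leq_trans IH) ?leq_addr.
Qed.

Lemma count_lt_iota k N : k <= N -> count (fun i => i < k) (iota 0 N) = k.
Proof.
move=> le_kN; rewrite -(subnKC le_kN) iotaD count_cat add0n.
rewrite (eq_in_count (a2 := predT)) => [|i]; last by rewrite mem_iota.
rewrite count_predT size_iota (eq_in_count (a2 := pred0)) => [|i]; last first.
  by rewrite mem_iota /= => /andP [le_ki _]; rewrite ltnNge le_ki.
by rewrite count_pred0 addn0.
Qed.

Section CompatibleTuples.
Variables (N d : nat) (D : pred nat).
Hypothesis D_lt : forall i, D i -> i.+1 < N.
Local Notation cb := (count_below D).
Local Notation k := (count_below D N).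

(* [D i] counts as 1 exactly at the positions where the increase must be strict. *)
Definition compatible_tuple p (t : N.-tuple 'I_p) : bool :=
  [forall i : 'I_N, forall j : 'I_N, (j == i.+1 :> nat) ==> (tnth t i + D i <= tnth t j)].

Lemma compatible_gap p (t : N.-tuple 'I_p) : compatible_tuple t ->
  forall i j : 'I_N, i <= j -> tnth t i + (cb j - cb i) <= tnth t j.
Proof.
move=> t_compat i [j lt_jN] /= le_ij.
elim: j lt_jN le_ij => [|j IH] lt_jN le_ij.
  have -> : i = Ordinal lt_jN by apply: val_inj => /=; lia.
  by rewrite subnn addn0.
have [eq_ij | ne_ij] := eqVneq (nat_of_ord i) j.+1.
  have -> : i = Ordinal lt_jN by apply: val_inj.
  by rewrite subnn addn0.
have lt_j'N : j < N by lia.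
have le_ij' : i <= j by lia.
have := IH lt_j'N le_ij'; have := count_below_mono D le_ij'.
move: t_compat => /forallP/(_ (Ordinal lt_j'N))/forallP/(_ (Ordinal lt_jN)).
rewrite count_belowS /= eqxx /=; lia.
Qed.

Lemma count_below_last : 0 < N -> k = cb N.-1.
Proof.
move=> N_gt0; rewrite -{1}(prednK N_gt0) count_belowS.
by case: (boolP (D N.-1)) => [/D_lt|]; [lia | rewrite addn0].
Qed.

Lemma compatible_bounds (t : N.-tuple 'I_d.+1) : compatible_tuple t ->
  forall i : 'I_N, cb i <= tnth t i /\ tnth t i + (k - cb i) <= d.
Proof.
move=> t_compat i; have N_gt0 : 0 < N by apply: leq_ltn_trans (ltn_ord i).
have lt_lastN : N.-1 < N by rewrite prednK.
have := compatible_gap t_compat (leq0n i : Ordinal N_gt0 <= i).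
have le_i_last : i <= Ordinal lt_lastN by rewrite /= -ltnS prednK.
have := compatible_gap t_compat le_i_last.
have := ltn_ord (tnth t (Ordinal lt_lastN)); have := ltn_ord i.
have := count_below_mono D le_i_last; have cb0 : cb 0 = 0 by [].
rewrite (count_below_last N_gt0) /=; lia.
Qed.

Lemma count_below_le (i : 'I_N) : cb i <= k.
Proof. exact/count_below_mono/ltnW. Qed.

(* Subtracting the number of earlier strict positions turns a compatible tuple
   into a weakly increasing one with entries at most [d - k]. *)
Definition shift_down (t : N.-tuple 'I_d.+1) : N.-tuple 'I_(d - k).+1 :=
  [tuple inord (tnth t i - cb i) | i < N].

Definition shift_up (u : N.-tuple 'I_(d - k).+1) : N.-tuple 'I_d.+1 :=
  [tuple inord (tnth u i + cb i) | i < N].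

Lemma tnth_shift_down t i : compatible_tuple t ->
  tnth (shift_down t) i = tnth t i - cb i :> nat.
Proof.
move=> /compatible_bounds/(_ i) bnd; rewrite tnth_mktuple inordK //.
have := count_below_le i; lia.
Qed.

Lemma tnth_shift_up u i : k <= d -> tnth (shift_up u) i = tnth u i + cb i :> nat.
Proof.
move=> le_kd; rewrite tnth_mktuple inordK //.
have := ltn_ord (tnth u i); have := count_below_le i; lia.
Qed.

Lemma shift_down_sorted t : compatible_tuple t -> sorted leq (map val (shift_down t)).
Proof.
move=> t_compat; apply/sorted_tupleP => i j le_ij.
rewrite !tnth_shift_down //; have := compatible_gap t_compat le_ij.
have := count_below_mono D le_ij; have := compatible_bounds t_compat i; lia.
Qed.

Lemma shift_up_compatible (u : N.-tuple 'I_(d - k).+1) : k <= d -> sorted leq (map val u) ->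
  compatible_tuple (shift_up u).
Proof.
move=> le_kd /sorted_tupleP u_sorted.
apply/forallP => i; apply/forallP => j; apply/implyP => /eqP j_succ.
have le_ij : i <= j by rewrite j_succ.
have := u_sorted i j le_ij; rewrite !tnth_shift_up // j_succ count_belowS; lia.
Qed.

Lemma card_compatible_tuples :
  #|[set t : N.-tuple 'I_d.+1 | compatible_tuple t]| =
  if k <= d then 'C(N + (d - k), N) else 0.
Proof.
case: leqP => [le_kd | lt_dk]; last first.
  apply: eq_card0 => t; rewrite inE; apply/negP => t_compat.
  have N_gt0 : 0 < N by rewrite lt0n; apply: contraTneq lt_dk => ->.
  by have [] := compatible_bounds t_compat (Ordinal N_gt0); rewrite /=; lia.
rewrite -card_sorted_tuples.
apply: (card_in_bij (f := shift_down) (g := shift_up)) => [t | u | t | u];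
  rewrite !inE.
- exact: shift_down_sorted.
- exact: shift_up_compatible.
- move=> t_compat; apply: eq_from_tnth => i; apply: val_inj => /=.
  rewrite tnth_shift_up // tnth_shift_down ?subnK //.
  exact: (compatible_bounds t_compat i).1.
- move=> u_sorted; apply: eq_from_tnth => i; apply: val_inj => /=.
  by rewrite tnth_shift_down ?shift_up_compatible ?tnth_shift_up ?addnK.
Qed.

End CompatibleTuples.

Section PPartitions.
Variables (T : finType) (le : rel T) (N : nat) (lab : T -> 'I_N).
Hypotheses (card_T : #|T| = N) (lab_inj : injective lab)
  (lab_mono : forall p q, le p q -> lab p <= lab q).
Implicit Types (p q : T) (w : {ffun T -> 'I_N}).

Definition linear_extension (w : {ffun T -> 'I_N}) : bool :=
  injectiveb w && [forall p, forall q, le p q ==> (w p <= w q)].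

Definition descent (w : {ffun T -> 'I_N}) : pred nat := fun i =>
  [exists p, exists q, [&& w p == i :> nat, w q == i.+1 :> nat & lab q < lab p]].

Definition descents (w : {ffun T -> 'I_N}) : nat := #|[set i : 'I_N | descent w i]|.

Lemma descentsE w : descents w = count_below (descent w) N.
Proof. exact: card_ord_pred. Qed.

Lemma descent_lt w i : descent w i -> i.+1 < N.
Proof. by case/existsP => p /existsP [q /and3P [_ /eqP <- _]]. Qed.

Lemma descent_succ w p q : injective w -> w q = (w p).+1 :> nat ->
  descent w (w p) = (lab q < lab p).
Proof.
move=> w_inj q_succ; apply/existsP/idP => [[p' /existsP [q' /and3P []]] | lt_qp].
  move=> /eqP/val_inj/w_inj -> /eqP; rewrite -q_succ => /val_inj/w_inj -> //.
by exists p; apply/existsP; exists q; rewrite q_succ !eqxx.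
Qed.

Lemma linear_extension_bij w : linear_extension w -> bijective w.
Proof.
case/andP => /injectiveP w_inj _.
by apply: inj_card_bij => //; rewrite card_ord card_T.
Qed.

Variable d : nat.
Implicit Types (f : {ffun T -> 'I_d.+1}).

Definition order_preserving f : bool := [forall p, forall q, le p q ==> (f p <= f q)].

Definition compatible w f : bool :=
  [forall p, forall q, (w q == (w p).+1 :> nat) ==> (f p + (lab q < lab p) <= f q)].

Lemma compatibleE w winv f : cancel w winv -> cancel winv w ->
  compatible w f = compatible_tuple (descent w) [tuple f (winv i) | i < N].
Proof.
move=> wK winvK; have w_inj := can_inj wK.
apply/forallP/forallP => [f_compat i | t_compat p].
  apply/forallP => j; apply/implyP => /eqP j_succ; rewrite !tnth_mktuple.
  have j_succ' : w (winv j) = (w (winv i)).+1 :> nat by rewrite !winvK.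
  rewrite -[in descent w i](winvK i) (descent_succ w_inj j_succ').
  by move: (f_compat (winv i)) => /forallP/(_ (winv j))/implyP; apply; rewrite j_succ'.
apply/forallP => q; apply/implyP => /eqP q_succ.
have := t_compat (w p) => /forallP/(_ (w q))/implyP.
by rewrite !tnth_mktuple !wK (descent_succ w_inj q_succ); apply; rewrite q_succ.
Qed.

Lemma card_compatible w : linear_extension w ->
  #|[set f | compatible w f]| =
  if descents w <= d then 'C(N + (d - descents w), N) else 0.
Proof.
move=> w_lin; have [winv wK winvK] := linear_extension_bij w_lin.
rewrite descentsE -(card_compatible_tuples d (@descent_lt w)).
apply: (card_in_bij (f := fun f => [tuple f (winv i) | i < N])
                    (g := fun t => [ffun p => tnth t (w p)])) => [f | t | f _ | t _].
- by rewrite !inE (compatibleE _ wK winvK).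
- rewrite !inE (compatibleE _ wK winvK); congr compatible_tuple.
  by apply: eq_from_tnth => i; rewrite tnth_mktuple ffunE winvK.
- by apply/ffunP => p; rewrite ffunE tnth_mktuple wK.
- by apply: eq_from_tnth => i; rewrite tnth_mktuple ffunE winvK.
Qed.

Definition key_lt f p q : bool :=
  (f p < f q) || (f p == f q :> nat) && (lab p < lab q).

Lemma key_lt_irr f p : ~~ key_lt f p p.
Proof. rewrite /key_lt; lia. Qed.

Lemma key_lt_trans f p q s : key_lt f p q -> key_lt f q s -> key_lt f p s.
Proof. rewrite /key_lt; lia. Qed.

Lemma key_lt_total f p q : p != q -> key_lt f p q || key_lt f q p.
Proof.
move=> neq_pq; have : lab p != lab q :> nat by rewrite (inj_eq val_inj) (inj_eq lab_inj).
rewrite /key_lt; lia.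
Qed.

Lemma key_rank_bound f p : #|[set q | key_lt f q p]| < N.
Proof.
rewrite -card_T; apply: (@leq_trans #|[set~ p]|.+1).
  rewrite ltnS; apply: subset_leq_card; apply/subsetP => q.
  by rewrite !inE; apply: contraTneq => ->; apply: key_lt_irr.
by rewrite cardsC1 prednK //; apply/card_gt0P; exists p.
Qed.

(* The unique linear extension compatible with [f]: it lists [T] by increasing
   [(f p, lab p)]. *)
Definition key_rank f : {ffun T -> 'I_N} := [ffun p => Ordinal (key_rank_bound f p)].

Lemma key_rank_lt f p q : key_lt f p q -> key_rank f p < key_rank f q.
Proof.
move=> lt_pq; rewrite !ffunE; apply: proper_card; apply/properP; split.
  by apply/subsetP => s; rewrite !inE => /key_lt_trans; apply.
by exists p; rewrite !inE // (negbTE (key_lt_irr f p)).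
Qed.

Lemma key_rank_inj f : injective (key_rank f).
Proof.
move=> p q eq_pq; apply/eqP; apply: contraT => /(key_lt_total f).
by case/orP => /key_rank_lt; rewrite eq_pq ltnn.
Qed.

Lemma key_rank_linear_extension f : order_preserving f -> linear_extension (key_rank f).
Proof.
move=> f_mono; rewrite /linear_extension; apply/andP; split.
  exact/injectiveP/key_rank_inj.
apply/forallP => p; apply/forallP => q; apply/implyP => le_pq.
have [-> // | neq_pq] := eqVneq p q.
apply/ltnW/key_rank_lt; move: (lab_mono le_pq) (key_lt_total f neq_pq).
move: f_mono => /forallP/(_ p)/forallP/(_ q)/implyP/(_ le_pq).
rewrite /key_lt; lia.
Qed.

Lemma key_rank_compatible f : compatible (key_rank f) f.
Proof.
apply/forallP => p; apply/forallP => q; apply/implyP => /eqP q_succ.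
have neq_pq : p != q by apply: contra_eqN q_succ => /eqP ->; lia.
have : key_lt f p q.
  by case/orP: (key_lt_total f neq_pq) => // /key_rank_lt; rewrite q_succ; lia.
rewrite /key_lt; lia.
Qed.

Section CompatiblePair.
Variables (w : {ffun T -> 'I_N}) (f : {ffun T -> 'I_d.+1}).
Hypotheses (w_lin : linear_extension w) (f_compat : compatible w f).

Lemma compatible_key_lt_succ p q : w q = (w p).+1 :> nat -> key_lt f p q.
Proof.
move=> q_succ; have neq_pq : p != q by apply: contra_eqN q_succ => /eqP ->; lia.
have : lab p != lab q :> nat by rewrite (inj_eq val_inj) (inj_eq lab_inj).
move: f_compat => /forallP/(_ p)/forallP/(_ q)/implyP; rewrite q_succ eqxx.
move=> /(_ isT); rewrite /key_lt; lia.
Qed.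

Lemma compatible_key_lt p q : w p < w q -> key_lt f p q.
Proof.
have [winv wK winvK] := linear_extension_bij w_lin.
suff key_lt_dist t : forall p q, w q = w p + t.+1 :> nat -> key_lt f p q.
  by move=> lt_pq; apply: (key_lt_dist (w q - w p).-1); lia.
elim: t => [|t IH] {}p {}q q_dist; first by apply: compatible_key_lt_succ; lia.
have lt_succN : (w p).+1 < N by have := ltn_ord (w q); lia.
apply: (@key_lt_trans _ _ (winv (Ordinal lt_succN))).
  by apply: compatible_key_lt_succ; rewrite winvK.
by apply: IH; rewrite winvK /=; lia.
Qed.

Lemma compatible_order_preserving : order_preserving f.
Proof.
apply/forallP => p; apply/forallP => q; apply/implyP => le_pq.
have [-> // | neq_pq] := eqVneq p q.
have : w p != w q :> nat.
  by rewrite (inj_eq val_inj) (inj_eq (bij_inj (linear_extension_bij w_lin))).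
move: w_lin => /andP [_ /forallP/(_ p)/forallP/(_ q)/implyP/(_ le_pq)] le_w ne_w.
have : key_lt f p q by apply: compatible_key_lt; lia.
rewrite /key_lt; lia.
Qed.

Lemma compatible_key_rank : w = key_rank f.
Proof.
have [winv wK winvK] := linear_extension_bij w_lin.
have w_inj := can_inj wK.
apply/ffunP => p; apply: val_inj; rewrite ffunE /=.
have -> : [set q | key_lt f q p] = [set q | w q < w p].
  apply/setP => q; rewrite !inE; apply/idP/idP => [lt_qp | /compatible_key_lt //].
  case: ltngtP => // [/compatible_key_lt /key_lt_trans /(_ lt_qp) | /val_inj/w_inj eq_qp].
    by rewrite (negbTE (key_lt_irr _ _)).
  by rewrite eq_qp (negbTE (key_lt_irr _ _)) in lt_qp.
rewrite -(card_imset _ w_inj).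
have -> : w @: [set q | w q < w p] = [set i : 'I_N | i < w p].
  apply/setP => i; rewrite !inE; apply/imsetP/idP => [[q] | lt_ip].
    by rewrite inE => ? ->.
  by exists (winv i); rewrite ?inE winvK.
by rewrite (card_ord_pred N (fun i => i < w p)) count_lt_iota // ltnW.
Qed.

End CompatiblePair.

Lemma card_order_preserving_compatible :
  #|[set f | order_preserving f]| =
  \sum_(w | linear_extension w) #|[set f | compatible w f]|.
Proof.
rewrite -sum1dep_card; under [RHS]eq_bigr => w _ do rewrite -sum1dep_card.
rewrite (exchange_big_dep order_preserving) /=; last first.
  by move=> w f; apply: compatible_order_preserving.
apply: eq_bigr => f f_mono.
rewrite (bigD1 (key_rank f)) /=; last first.
  by rewrite key_rank_linear_extension ?key_rank_compatible.
rewrite big1 ?addn0 // => w /andP [/andP [w_lin f_compat]].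
by rewrite (compatible_key_rank w_lin f_compat) eqxx.
Qed.

Theorem card_order_preserving :
  #|[set f | order_preserving f]| =
  \sum_(w | linear_extension w)
     if descents w <= d then 'C(N + (d - descents w), N) else 0.
Proof.
rewrite card_order_preserving_compatible; apply: eq_bigr => w w_lin.
exact: card_compatible.
Qed.

End PPartitions.

Section Chains.
Variables (m n r d : nat).
Local Notation P := (Pmnr m.+1 n.+1 r.+1).

Definition chain_tuples (f : {ffun P -> 'I_d.+1}) :=
  ([tuple f (inl (inl i)) | i < m], [tuple f (inl (inr j)) | j < n],
   [tuple f (inr k) | k < r]).

Definition of_chain_tuples (t : m.-tuple 'I_d.+1 * n.-tuple 'I_d.+1 * r.-tuple 'I_d.+1) :
    {ffun P -> 'I_d.+1} :=
  [ffun p => match p with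
             | inl (inl i) => tnth t.1.1 i
             | inl (inr j) => tnth t.1.2 j
             | inr k => tnth t.2 k
             end].

Lemma card_order_preserving_chains :
  #|[set f : {ffun P -> 'I_d.+1} | order_preserving (@Ple m.+1 n.+1 r.+1) f]| =
  'C(m + d, m) * 'C(n + d, n) * 'C(r + d, r).
Proof.
rewrite -!card_sorted_tuples -!cardsX.
apply: (card_in_bij (f := chain_tuples) (g := of_chain_tuples)).
- move=> f; rewrite !inE => /forallP f_mono.
  rewrite -andbA; apply/and3P; split; apply/sorted_tupleP => i j le_ij; rewrite !tnth_mktuple.
  + by move: (f_mono (inl (inl i))) => /forallP/(_ (inl (inl j)))/implyP; apply.
  + by move: (f_mono (inl (inr i))) => /forallP/(_ (inl (inr j)))/implyP; apply.
  + by move: (f_mono (inr i)) => /forallP/(_ (inr j))/implyP; apply.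
- move=> [[tA tB] tC]; rewrite !inE -andbA /=.
  move=> /and3P [/sorted_tupleP sA /sorted_tupleP sB /sorted_tupleP sC].
  apply/forallP => p; apply/forallP => q; apply/implyP; rewrite !ffunE.
  case: p => [[a|b]|c]; case: q => [[a'|b']|c'] //= le_pq;
    [exact: sA | exact: sB | exact: sC].
- move=> f _; apply/ffunP => p; rewrite ffunE.
  by case: p => [[a|b]|c]; rewrite /= tnth_mktuple.
- move=> [[tA tB] tC] _ /=.
  by congr (_, _, _); apply: eq_from_tnth => i; rewrite tnth_mktuple ffunE.
Qed.

End Chains.

Import GRing.Theory Num.Theory.
Local Open Scope ring_scope.

Lemma rows_dependent (K : fieldType) k (V : 'I_k.+1 -> 'rV[K]_k) :
  exists2 c : 'rV_k.+1, c != 0 & forall j, \sum_i c 0 i * V i 0 j = 0.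
Proof.
pose M := \matrix_(i, j) V i 0 j.
have ker_nz : kermx M != 0.
  rewrite kermx_eq0 /row_free; apply: contraTneq (rank_leq_col M) => ->.
  by rewrite ltnn.
have [i0 ker_i0] : exists i0, row i0 (kermx M) != 0.
  apply/existsP; move: ker_nz; apply: contraNT => /existsPn ker0.
  by apply/eqP/row_matrixP => i; rewrite row0; apply/eqP/negPn.
exists (row i0 (kermx M)) => // j.
transitivity ((kermx M *m M) i0 j); last by rewrite mulmx_ker mxE.
by rewrite !mxE; apply: eq_bigr => i _; rewrite !mxE.
Qed.

Section IdealCongruence.
Variables (N : nat) (K : fieldType) (G : {mpoly K[N]} -> Prop).
Implicit Types p q : {mpoly K[N]}.

Lemma in_ideal0 : in_ideal G 0.
Proof. by exists [::]; rewrite big_nil. Qed.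

Lemma in_idealG g : G g -> in_ideal G g.
Proof.
move=> Gg; exists [:: (1, g)]; rewrite big_seq1 mul1r.
by split=> // x; rewrite inE => /eqP ->.
Qed.

Lemma in_idealD p q : in_ideal G p -> in_ideal G q -> in_ideal G (p + q).
Proof.
move=> [s [Gs ->]] [t [Gt ->]]; exists (s ++ t); rewrite big_cat.
by split=> // x; rewrite mem_cat => /orP [/Gs | /Gt].
Qed.

Lemma in_idealMl q p : in_ideal G p -> in_ideal G (q * p).
Proof.
move=> [s [Gs ->]]; exists [seq (q * x.1, x.2) | x <- s]; split.
  by move=> _ /mapP [x /Gs Gx ->].
by rewrite big_map mulr_sumr; apply: eq_bigr => x _; rewrite mulrA.
Qed.

Definition eqmod p q := in_ideal G (p - q).

Lemma eqmod_refl p : eqmod p p.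
Proof. by rewrite /eqmod subrr; apply: in_ideal0. Qed.

Lemma eqmod_eq p q : p = q -> eqmod p q.
Proof. by move=> ->; apply: eqmod_refl. Qed.

Lemma eqmod_trans p q s : eqmod p q -> eqmod q s -> eqmod p s.
Proof. by move=> Ipq Iqs; have := in_idealD Ipq Iqs; rewrite /eqmod addrA subrK. Qed.

Lemma eqmodMl s p q : eqmod p q -> eqmod (s * p) (s * q).
Proof. by rewrite /eqmod -mulrBr; apply: in_idealMl. Qed.

Lemma eqmodZ c p q : eqmod p q -> eqmod (c *: p) (c *: q).
Proof. by rewrite /eqmod -scalerBr -!mul_mpolyC; apply: in_idealMl. Qed.

Lemma eqmodD p q p' q' : eqmod p q -> eqmod p' q' -> eqmod (p + p') (q + q').
Proof. by move=> Ipq Ipq'; have := in_idealD Ipq Ipq'; rewrite /eqmod opprD addrACA. Qed.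

Lemma eqmod_sum (I : Type) (s : seq I) (F F' : I -> {mpoly K[N]}) :
  (forall i, eqmod (F i) (F' i)) -> eqmod (\sum_(i <- s) F i) (\sum_(i <- s) F' i).
Proof.
move=> IFF'; elim: s => [|i s IH]; first by rewrite !big_nil; apply: eqmod_refl.
by rewrite !big_cons; apply: eqmodD.
Qed.

Lemma eqmod_in_ideal p q : eqmod p q -> in_ideal G q -> in_ideal G p.
Proof. by move=> Ipq Iq; have := in_idealD Ipq Iq; rewrite subrK. Qed.

Section Basis.
Variables (d k : nat) (b : 'I_k -> {mpoly K[N]}).
Hypothesis monomial_eqmod_b :
  forall e : 'X_{1..N}, mdeg e = d -> exists j, eqmod 'X_[e] (b j).

Lemma homog_eqmod_span p : p \is d.-homog ->
  exists v : 'rV[K]_k, eqmod p (\sum_j v 0 j *: b j).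
Proof.
move=> p_homog; rewrite [p]mpolyE.
have : all (fun e => mdeg e == d) (msupp p).
  by apply/allP => e /(dhomog_mf p_homog) /eqP.
elim: (msupp p) => [|e s IH] /=.
  move=> _; exists 0; rewrite big_nil; apply: eqmod_eq.
  by rewrite big1 // => j _; rewrite mxE scale0r.
case/andP => /eqP /monomial_eqmod_b [j0 e_j0] /IH [v s_v].
exists (v + p@_e *: \row_j (j == j0)%:R).
rewrite big_cons addrC; apply: eqmod_trans (eqmodD s_v (eqmodZ p@_e e_j0)) _.
apply: eqmod_eq; under [RHS]eq_bigr => j _ do rewrite !mxE scalerDl mulrC -scalerA.
rewrite big_split /=; congr (_ + _).
rewrite (bigD1 j0) //= eqxx scale1r big1 ?addr0 // => j /negbTE ->.
by rewrite scale0r.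
Qed.

Lemma hilb_dim_basis : indep_mod G d b -> hilb_dim G d k.
Proof.
move=> b_indep; split; first by exists b.
move=> p [p_homog p_indep].
have /fin_all_exists [V p_eqmod] := fun i => homog_eqmod_span (p_homog i).
have [c c_nz cV0] := rows_dependent V.
suff c0 : forall i, c 0 i = 0 by case/eqP: c_nz; apply/rowP => i; rewrite c0 mxE.
apply: p_indep; apply: eqmod_in_ideal (eqmod_sum _ (fun i => eqmodZ (c 0 i) (p_eqmod i))) _.
under eq_bigr do rewrite scaler_sumr.
rewrite exchange_big big1 => [|j _]; first exact: in_ideal0.
rewrite (eq_bigr (fun i => (c 0 i * V i 0 j) *: b j)) => [|i _]; last exact: scalerA.
by rewrite -scaler_suml cV0 scale0r.
Qed.

End Basis.
End IdealCongruence.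

Local Notation sorted_ord s := (sorted leq (map val s)).

Definition minord p (a b : 'I_p) := if (a <= b)%N then a else b.
Definition maxord p (a b : 'I_p) := if (a <= b)%N then b else a.

Lemma minordC p : commutative (@minord p).
Proof. by move=> a b; rewrite /minord; case: (ltngtP a b) => // /val_inj. Qed.

Lemma maxordC p : commutative (@maxord p).
Proof. by move=> a b; rewrite /maxord; case: (ltngtP a b) => // /val_inj. Qed.

Fixpoint insert p (a : 'I_p) (s : seq 'I_p) : seq 'I_p :=
  if s is b :: s' then (if (a <= b)%N then a :: s else b :: insert a s') else [:: a].

Lemma size_insert p (a : 'I_p) s : size (insert a s) = (size s).+1.
Proof. by elim: s => //= b s IH; case: ifP => //= _; rewrite IH. Qed.

Lemma all_insert p (P : pred 'I_p) a s : all P (insert a s) = P a && all P s.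
Proof.
elim: s => [|b s IH] /=; first by rewrite andbT.
by case: ifP => _ //=; rewrite IH andbCA.
Qed.

Lemma sorted_ord_cons p (b : 'I_p) s :
  sorted_ord (b :: s) = all (fun c : 'I_p => (b <= c)%N) s && sorted_ord s.
Proof. by rewrite /= path_sortedE ?all_map //; apply: leq_trans. Qed.

Lemma sorted_insert p (a : 'I_p) s : sorted_ord s -> sorted_ord (insert a s).
Proof.
elim: s => [|b s IH] //; rewrite sorted_ord_cons => /andP [b_le s_sorted].
rewrite [insert _ _]/=; case: ifP => le_ab; rewrite sorted_ord_cons.
  rewrite sorted_ord_cons /= le_ab b_le s_sorted !andbT.
  by apply/allP => c /(allP b_le); apply: leq_trans.
by rewrite IH // all_insert b_le andbT ltnW // ltnNge le_ab.
Qed.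

Lemma insert_cons p (a b : 'I_p) s : sorted_ord (b :: s) ->
  insert a (b :: s) = minord a b :: insert (maxord a b) s.
Proof.
rewrite /= /minord /maxord; case: ifP => // _.
by case: s => //= c s /andP [-> _].
Qed.

Lemma sorted_ord_eq p (A A' : seq 'I_p) : sorted_ord A -> sorted_ord A' ->
  (forall i, count_mem i A = count_mem i A') -> A = A'.
Proof.
move=> sA sA' count_AA'; apply: (inj_map val_inj).
apply: (sorted_eq leq_trans anti_leq) => //; apply: perm_map.
by apply/allP => i _; apply/eqP.
Qed.

Section Straightening.
Variables (K : fieldType) (m n r : nat).
Local Notation G := (@minors2 K m n r).
Local Notation x := (@xv K m n r).
Local Notation eqG := (eqmod G).

Lemma eqmod_swap_j i i' j j' k k' : eqG (x i j k * x i' j' k') (x i j' k * x i' j k').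
Proof.
have [<- | neq_j] := eqVneq j j'; first exact: eqmod_refl.
have [[<- <-] | neq_ik] := eqVneq (i, k) (i', k'); first by apply: eqmod_eq; rewrite mulrC.
by apply: in_idealG; right; exists i, i', j, j', k, k'.
Qed.

Lemma eqmod_swap_jk i i' j j' k k' : eqG (x i j k * x i' j' k') (x i j' k' * x i' j k).
Proof.
have [<- | neq_i] := eqVneq i i'; first by apply: eqmod_eq; rewrite mulrC.
have [[<- <-] | neq_jk] := eqVneq (j, k) (j', k'); first exact: eqmod_refl.
by apply: in_idealG; left; exists i, i', j, j', k, k'.
Qed.

Lemma eqmod_swap_k i i' j j' k k' : eqG (x i j k * x i' j' k') (x i j k' * x i' j' k).
Proof. exact: eqmod_trans (eqmod_swap_jk _ _ _ _ _ _) (eqmod_swap_j _ _ _ _ _ _). Qed.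

Lemma eqmod_sort_pair i i' j j' k k' :
  eqG (x i j k * x i' j' k')
      (x (minord i i') (minord j j') (minord k k') * x (maxord i i') (maxord j j') (maxord k k')).
Proof.
wlog le_ii' : i i' j j' k k' / (i <= i')%N.
  move=> sort_le; case: (leqP i i') => [/sort_le // | /ltnW/sort_le].
  by rewrite mulrC minordC (minordC j) (minordC k) maxordC (maxordC j) (maxordC k).
rewrite /minord /maxord le_ii'; case: leqP => _; case: leqP => _.
- exact: eqmod_refl.
- exact: eqmod_swap_k.
- exact: eqmod_swap_j.
- exact: eqmod_swap_jk.
Qed.

Definition stdmon (A : seq 'I_m) (B : seq 'I_n) (C : seq 'I_r) : {mpoly K[nvars m n r]} :=
  \prod_(t <- zip (zip A B) C) x t.1.1 t.1.2 t.2.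

Lemma stdmon_cons a b c A B C : stdmon (a :: A) (b :: B) (c :: C) = x a b c * stdmon A B C.
Proof. by rewrite /stdmon /= big_cons. Qed.

Lemma eqmod_stdmon_insert A B C a b c :
  size A = size B -> size B = size C -> sorted_ord A -> sorted_ord B -> sorted_ord C ->
  eqG (x a b c * stdmon A B C) (stdmon (insert a A) (insert b B) (insert c C)).
Proof.
elim: A a b c B C => [|a1 A IH] a b c [|b1 B] [|c1 C] //.
  by move=> *; apply: eqmod_eq; rewrite -stdmon_cons.
move=> [size_AB] [size_BC] sA sB sC.
rewrite (insert_cons a sA) (insert_cons b sB) (insert_cons c sC) !stdmon_cons mulrA.
move: sA sB sC; rewrite !sorted_ord_cons => /andP [_ sA] /andP [_ sB] /andP [_ sC].
have := eqmodMl (stdmon A B C) (eqmod_sort_pair a a1 b b1 c c1).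
rewrite ![stdmon A B C * _]mulrC => /eqmod_trans; apply.
by rewrite -mulrA; apply: eqmodMl; apply: IH.
Qed.

Lemma monomial_eqmod_stdmon d (e : 'X_{1..nvars m n r}) : mdeg e = d ->
  exists A B C, [/\ size A = d, size B = d & size C = d] /\
    [/\ sorted_ord A, sorted_ord B & sorted_ord C] /\ eqG 'X_[e] (stdmon A B C).
Proof.
elim: d e => [|d IH] e deg_e.
  move/eqP: deg_e; rewrite mdeg_eq0 => /eqP ->.
  exists [::], [::], [::]; rewrite mpolyX0 /stdmon big_nil.
  by split=> //; split=> //; apply: eqmod_refl.
have [v e_v] : exists v, e v != 0%N.
  apply/existsP; apply: contraPT deg_e => /existsPn e0.
  suff -> : e = 0%MM by rewrite mdeg0.
  by apply/mnmP => v; rewrite mnm0E; apply/eqP; rewrite -[_ == _]negbK e0.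
have le_ve : (U_(v) <= e)%MM by rewrite lep1mP.
have deg_e' : mdeg (e - U_(v))%MM = d.
  by apply/eqP; rewrite -eqSS -deg_e -{2}(submK le_ve) mdegD mdeg1 addn1.
have [A [B [C [[sA sB sC] [[oA oB oC] e'_std]]]]] := IH _ deg_e'.
case def_v: (enum_val v) => [[a b] c].
exists (insert a A), (insert b B), (insert c C).
split; first by rewrite !size_insert sA sB sC.
split; first by rewrite !sorted_insert.
rewrite -(submK le_ve) mpolyXD mulrC.
have -> : 'X_v = x a b c by rewrite /xv -def_v enum_valK.
by apply: eqmod_trans (eqmodMl _ e'_std) _; apply: eqmod_stdmon_insert; rewrite ?sA ?sB ?sC.
Qed.

End Straightening.

Section Segre.
Variables (K : fieldType) (m n r : nat).
Local Notation G := (@minors2 K m n r).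
Local Notation V := ('I_m + 'I_n + 'I_r)%type.
Local Notation S := {mpoly K[#|{: V}|]}.

Definition segre_mon (t : 'I_m * 'I_n * 'I_r) : 'X_{1..#|{: V}|} :=
  (U_(enum_rank (inl (inl t.1.1) : V)) + U_(enum_rank (inl (inr t.1.2) : V))
   + U_(enum_rank (inr t.2 : V)))%MM.

Definition segre (p : {mpoly K[nvars m n r]}) : S :=
  p \mPo [tuple 'X_[segre_mon (enum_val i)] | i < nvars m n r].

Lemma segreM p q : segre (p * q) = segre p * segre q.
Proof. exact: rmorphM. Qed.

Lemma segre_xv i j k : segre (xv K i j k) = 'X_[segre_mon (i, j, k)].
Proof. by rewrite /segre /xv comp_mpolyXU -tnth_nth tnth_mktuple enum_rankK. Qed.

Lemma segre_minors2 g : G g -> segre g = 0.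
Proof.
case=> [[i [i' [j [j' [k [k' [_ [_ ->]]]]]]]] | [i [i' [j [j' [k [k' [_ [_ ->]]]]]]]]];
  rewrite /segre rmorphB /= -!/(segre _) !segreM !segre_xv /segre_mon !mpolyXD /=; ring.
Qed.

Lemma segre_ideal p : in_ideal G p -> segre p = 0.
Proof.
move=> [s [Gs ->]]; rewrite /segre rmorph_sum /=; apply: big1_seq => y /= y_s.
by rewrite -/(segre _) segreM (segre_minors2 (Gs _ y_s)) mulr0.
Qed.

Definition segre_exp A B C := (\sum_(t <- zip (zip A B) C) segre_mon t)%MM.

Lemma segre_stdmon A B C : segre (stdmon K A B C) = 'X_[segre_exp A B C].
Proof.
rewrite /stdmon /segre_exp -(big_map segre_mon xpredT id) -mpolyX_prod big_map.
rewrite /segre rmorph_prod; apply: eq_bigr => t _.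
by case: t => [[i j] k]; apply: segre_xv.
Qed.

Lemma segre_expE A B C (v : V) : size A = size B -> size B = size C ->
  segre_exp A B C (enum_rank v) =
  match v with
  | inl (inl i) => count_mem i A
  | inl (inr j) => count_mem j B
  | inr k => count_mem k C
  end.
Proof.
move=> size_AB size_BC; rewrite mnm_sumE.
under eq_bigr do rewrite !mnmDE !mnm1E !(inj_eq enum_rank_inj).
set z := zip (zip A B) C.
have size_zAB : size (zip A B) = size C by rewrite size_zip size_AB size_BC minnn.
have zA : unzip1 (unzip1 z) = A by rewrite !unzip1_zip ?size_zAB ?size_AB.
have zB : unzip2 (unzip1 z) = B by rewrite unzip1_zip ?unzip2_zip ?size_zAB ?size_AB.
have zC : unzip2 z = C by rewrite unzip2_zip ?size_zAB.
case: v => [[i|j]|k]; [rewrite -zA | rewrite -zB | rewrite -zC];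
  rewrite -sum_nat_bool ?big_map; apply: eq_bigr => t _ /=.
all: by rewrite ?addn0.
Qed.

End Segre.

Lemma segre_exp_inj m n r (A A' : seq 'I_m) (B B' : seq 'I_n) (C C' : seq 'I_r) :
  size A = size B -> size B = size C -> size A' = size B' -> size B' = size C' ->
  sorted_ord A -> sorted_ord B -> sorted_ord C ->
  sorted_ord A' -> sorted_ord B' -> sorted_ord C' ->
  segre_exp A B C = segre_exp A' B' C' -> [/\ A = A', B = B' & C = C'].
Proof.
move=> sAB sBC sAB' sBC' oA oB oC oA' oB' oC' eq_exp.
have := fun v => congr1 (fun e : 'X_{1.._} => e (enum_rank v)) eq_exp.
move=> /= eq_at; split; apply: sorted_ord_eq => // i.
- by have := eq_at (inl (inl i)); rewrite !segre_expE.
- by have := eq_at (inl (inr i)); rewrite !segre_expE.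
- by have := eq_at (inr i); rewrite !segre_expE.
Qed.

Section HilbertFunction.
Variables (K : fieldType) (m n r d : nat).
Local Notation G := (@minors2 K m n r).

Definition std_tuples := [set t : d.-tuple 'I_m * d.-tuple 'I_n * d.-tuple 'I_r |
  [&& sorted_ord t.1.1, sorted_ord t.1.2 & sorted_ord t.2]].

Definition std_basis (j : 'I_#|std_tuples|) : {mpoly K[nvars m n r]} :=
  stdmon K (enum_val j).1.1 (enum_val j).1.2 (enum_val j).2.

Lemma stdmon_homog (A : seq 'I_m) (B : seq 'I_n) (C : seq 'I_r) :
  size A = size B -> size B = size C ->
  stdmon K A B C \is (size A).-homog.
Proof.
elim: A B C => [|a A IH] [|b B] [|c C] // => [_ _ | [sAB] [sBC]].
  by rewrite /stdmon big_nil dhomog1.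
rewrite stdmon_cons [size _]/= -add1n; apply: dhomogM; last exact: IH.
by rewrite /xv dhomogX; apply/eqP/mdeg1.
Qed.

Lemma segre_exp_std_inj :
  {in std_tuples &, injective (fun t : d.-tuple 'I_m * d.-tuple 'I_n * d.-tuple 'I_r =>
                                segre_exp t.1.1 t.1.2 t.2)}.
Proof.
move=> [[A B] C] [[A' B'] C']; rewrite !inE /= => /and3P [oA oB oC] /and3P [oA' oB' oC'].
have size_eq (I J : finType) (s : d.-tuple I) (t : d.-tuple J) : size s = size t.
  by rewrite !size_tuple.
move/(segre_exp_inj (size_eq _ _ A B) (size_eq _ _ B C) (size_eq _ _ A' B') (size_eq _ _ B' C')).
by move=> /(_ oA oB oC oA' oB' oC') [/val_inj -> /val_inj -> /val_inj ->].
Qed.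

Lemma std_basis_indep : indep_mod G d std_basis.
Proof.
split=> [j | c c_ideal j0].
  have := @stdmon_homog (enum_val j).1.1 (enum_val j).1.2 (enum_val j).2.
  by rewrite !size_tuple; apply.
pose E (j : 'I_#|std_tuples|) := segre_exp (enum_val j).1.1 (enum_val j).1.2 (enum_val j).2.
have segre_sum : segre (\sum_j c j *: std_basis j) = \sum_j c j *: 'X_[E j].
  rewrite /segre linear_sum; apply: eq_bigr => j _.
  by rewrite linearZ /= -/(segre _) segre_stdmon.
move: (segre_ideal c_ideal); rewrite segre_sum => /(congr1 (mcoeff (E j0))).
rewrite mcoeff0 raddf_sum (bigD1 j0) //= big1 => [|j neq_jj0].
  by rewrite mcoeffZ mcoeffX eqxx mulr1 addr0.
rewrite mcoeffZ mcoeffX; case: eqP => [eq_exp | _]; last by rewrite mulr0.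
by case/eqP: neq_jj0; apply/enum_val_inj/segre_exp_std_inj => //; apply: enum_valP.
Qed.

Lemma monomial_eqmod_std_basis (e : 'X_{1..nvars m n r}) : mdeg e = d ->
  exists j, eqmod G 'X_[e] (std_basis j).
Proof.
move=> /(monomial_eqmod_stdmon K) [A [B [C [[/eqP sA /eqP sB /eqP sC] [[oA oB oC] e_std]]]]].
have t_std : (Tuple sA, Tuple sB, Tuple sC) \in std_tuples by rewrite inE /= oA oB oC.
by exists (enum_rank_in t_std (Tuple sA, Tuple sB, Tuple sC)); rewrite /std_basis enum_rankK_in.
Qed.

Lemma hilb_dim_minors2 : hilb_dim G d #|std_tuples|.
Proof. exact: hilb_dim_basis monomial_eqmod_std_basis std_basis_indep. Qed.

End HilbertFunction.

Lemma card_std_tuples m n r d :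
  #|std_tuples m.+1 n.+1 r.+1 d| = ('C(m + d, m) * 'C(n + d, n) * 'C(r + d, r))%N.
Proof.
rewrite (addnC m) (addnC n) (addnC r) -!binC -!card_sorted_tuples -!cardsX.
by apply: eq_card => -[[A B] C]; rewrite !inE andbA.
Qed.

Lemma sum_coef_sum_Xn (I : finType) (P : pred I) (D : I -> nat) (F : nat -> int) d :
  \sum_(i < d.+1) (\sum_(w | P w) 'X^(D w) : {poly int})`_i * F i =
  \sum_(w | P w) (if (D w <= d)%N then F (D w) else 0).
Proof.
under eq_bigr do rewrite coef_sum mulr_suml.
rewrite exchange_big /=; apply: eq_bigr => w _.
under eq_bigr do rewrite coefXn mulr_natl mulrb.
by rewrite -big_mkcond big_ord1_eq ltnS.
Qed.

Lemma des_poly_at1_neq0 m n r (lab : Pmnr m n r -> 'I_(Nsize m n r)) :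
  natural_labeling lab -> (des_poly lab).[1] != 0.
Proof.
move=> [/bij_inj lab_inj lab_mono]; rewrite /des_poly horner_sum.
under eq_bigr do rewrite hornerXn expr1n.
rewrite sumr_const pnatr_eq0 -lt0n; apply/card_gt0P.
exists [ffun p => lab p]; apply/andP; split.
  by apply/injectiveP => p q; rewrite !ffunE => /lab_inj.
by apply/forallP => p; apply/forallP => q; apply/implyP; rewrite !ffunE; apply: lab_mono.
Qed.

Theorem corollary4p5 (K : fieldType) (m n r : nat)
  (hm : (0 < m)%N) (hn : (0 < n)%N) (hr : (0 < r)%N)
  (lab : Pmnr m n r -> 'I_(Nsize m n r)) (hlab : natural_labeling lab) :
  is_h_polynomial (@minors2 K m n r) (des_poly lab).
Proof.
split; first exact: des_poly_at1_neq0.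
case: m hm lab hlab => // m _; case: n hn => // n _; case: r hr => // r _.
move=> lab [/bij_inj lab_inj lab_mono]; set N := Nsize m.+1 n.+1 r.+1.
have card_P : #|{: Pmnr m.+1 n.+1 r.+1}| = N by rewrite !card_sum !card_ord.
(* R/I has Krull dimension m + n + r - 2 = N + 1. *)
exists N.+1 => d; exists #|std_tuples m.+1 n.+1 r.+1 d|.
split; first exact: hilb_dim_minors2.
rewrite /des_poly (sum_coef_sum_Xn _ _ (fun i => 'C(d - i + N.+1 - 1, d - i)%:Z)).
rewrite card_std_tuples -card_order_preserving_chains.
rewrite (card_order_preserving card_P lab_inj lab_mono) -natz natr_sum.
apply: eq_bigr => w _; case: leqP => // le_des_d.
by rewrite natz binC addnS subn1 addnC.
Qed.
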